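(* Let $P$ be a set of $n$ points in $\mathbb{R}^d$ and let $P_1,\dots,P_j\subseteq P$ be pairwise disjoint nonempty subsets. Let $o_l$ be a median point of $P_l$ ($1\le l\le j$), $o$ a median point of $P$, and $\mathcal{F}$ the affine flat spanned by $\{o_1,\dots,o_j\}$. Suppose $|P\setminus\bigcup_{l=1}^jP_l|\le\epsilon|P|$ for some $\epsilon\in(0,1/5)$, and each $P_l$ is contained in the ball $\mathcal{B}(o_l,L)$ of center $o_l$ and radius $L\ge0$. Then one can construct, from $o_1,\dots,o_j$, $L$ and $\epsilon$ alone, a grid $G\subset\mathcal{F}$ of size $O\big(j^2(\frac{j\sqrt j}{\epsilon})^j\big)$ such that at least one grid point $\tau\in G$ satisfies $$\frac1{|P|}\sum_{p\in P}\|\tau-p\|\le\Big(1+\frac94\epsilon\Big)\frac1{|P|}\sum_{p\in P}\|p-o\|+(1+\epsilon)L.$$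
   Context: A median point of a finite set $X\subset\mathbb{R}^d$ is a point $x\in\mathbb{R}^d$ minimizing $\sum_{p\in X}\|p-x\|$ (geometric median). The implied constant in the $O$-bound may depend on $j$. *)

From HB Require Import structures.
From mathcomp Require Import all_boot all_order all_algebra.
From mathcomp Require Import finmap.
From mathcomp Require Import reals.
Set Implicit Arguments. Unset Strict Implicit. Unset Printing Implicit Defensive.
Import Order.TTheory GRing.Theory Num.Theory.
Local Open Scope ring_scope.
Local Open Scope fset_scope.

Definition eucl (R : realType) (d : nat) (x : 'rV[R]_d) : R :=
  Num.sqrt (\sum_(i < d) (x ord0 i) ^+ 2).

Definition dist_sum (R : realType) (d : nat) (X : {fset 'rV[R]_d}) (x : 'rV[R]_d) : R :=
  \sum_(p <- X) eucl (p - x).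

Definition is_median (R : realType) (d : nat) (X : {fset 'rV[R]_d}) (o : 'rV[R]_d) : Prop :=
  forall x : 'rV[R]_d, dist_sum X o <= dist_sum X x.

Definition in_affine_span (R : realType) (d j : nat) (os : 'I_j -> 'rV[R]_d)
  (x : 'rV[R]_d) : Prop :=
  exists c : 'I_j -> R, \sum_(l < j) c l = 1 /\ x = \sum_(l < j) c l *: os l.

From HB Require Import structures.
From mathcomp Require Import all_boot all_order all_algebra.
From mathcomp Require Import finmap.
From mathcomp Require Import reals.
From mathcomp.algebra_tactics Require Import ring lra.
From mathcomp Require Import zify.
Import Order.TTheory GRing.Theory Num.Theory.
Local Open Scope ring_scope.
Set Implicit Arguments. Unset Strict Implicit. Unset Printing Implicit Defensive.

(* Project the median [o] orthogonally onto the flat through the centers, using an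
   orthonormal basis of its direction obtained by Gram-Schmidt.  A point [p] of cluster [l]
   is within [L] of [os l], which lies on the flat, so |pi(o) - p| <= |o - p| + L; each of
   the at most [eps n] outliers costs at most |o - pi(o)| more, and this distance is at most
   [L] plus the average distance from [o] to the inliers.  Hence cost(pi(o)) <= (1 + 5/4 eps) cost(o) + n L.
   The projection pi(o) is then rounded to a grid that depends only on the centers, [L] and
   [eps]: around each center [os l] and for each candidate scale [s] among [L] and the
   distances between centers, the cube of half-side [20 s] in the flat with mesh
   [eps s / (10 j)].  With [os l0] the center nearest to [o], the median property of [o]
   provides a candidate scale with |pi(o) - os l0| <= 20 s and s n <= 10 (cost(o) + n L),
   so some grid point is within [eps (cost(o) / n + L)] of pi(o). *)

Section InnerProduct.
Variables (R : realType) (d : nat).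
Implicit Types x y z u : 'rV[R]_d.

Definition dot x y : R := \sum_(i < d) x ord0 i * y ord0 i.

Lemma dotC x y : dot x y = dot y x.
Proof. by apply: eq_bigr => i _; rewrite mulrC. Qed.

Lemma dotDl x y z : dot (x + y) z = dot x z + dot y z.
Proof. by rewrite /dot -big_split; apply: eq_bigr => i _; rewrite !mxE mulrDl. Qed.

Lemma dotZl a x y : dot (a *: x) y = a * dot x y.
Proof. by rewrite /dot mulr_sumr; apply: eq_bigr => i _; rewrite !mxE mulrA. Qed.

Lemma dotNl x y : dot (- x) y = - dot x y.
Proof. by rewrite -scaleN1r dotZl mulN1r. Qed.

Lemma dotBl x y z : dot (x - y) z = dot x z - dot y z.
Proof. by rewrite dotDl dotNl. Qed.

Lemma dot0l x : dot 0 x = 0.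
Proof. by rewrite -(scale0r 0) dotZl mul0r. Qed.

Lemma dot_suml (I : Type) (r : seq I) (P : pred I) (F : I -> 'rV[R]_d) y :
  dot (\sum_(i <- r | P i) F i) y = \sum_(i <- r | P i) dot (F i) y.
Proof. by elim/big_rec2: _ => [|i a b _ <-]; rewrite ?dot0l ?dotDl. Qed.

Lemma dotDr x y z : dot x (y + z) = dot x y + dot x z.
Proof. by rewrite !(dotC x) dotDl. Qed.

Lemma dotZr a x y : dot x (a *: y) = a * dot x y.
Proof. by rewrite !(dotC x) dotZl. Qed.

Lemma dotBr x y z : dot x (y - z) = dot x y - dot x z.
Proof. by rewrite !(dotC x) dotBl. Qed.

Lemma dot0r x : dot x 0 = 0.
Proof. by rewrite dotC dot0l. Qed.

Lemma dot_sumr (I : Type) (r : seq I) (P : pred I) (F : I -> 'rV[R]_d) x :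
  dot x (\sum_(i <- r | P i) F i) = \sum_(i <- r | P i) dot x (F i).
Proof. by rewrite dotC dot_suml; apply: eq_bigr => i _; rewrite dotC. Qed.

Lemma dotxx_ge0 x : 0 <= dot x x.
Proof. by apply: sumr_ge0 => i _; rewrite -expr2 sqr_ge0. Qed.

Lemma dotxx_eq0 x : (dot x x == 0) = (x == 0).
Proof.
apply/idP/eqP => [|->]; last by rewrite dot0l.
rewrite psumr_eq0 => [/allP x0|i _]; last by rewrite -expr2 sqr_ge0.
apply/rowP => i; rewrite mxE; apply/eqP; rewrite -sqrf_eq0 expr2.
exact: x0 (mem_index_enum i).
Qed.

Lemma euclE x : eucl x = Num.sqrt (dot x x).
Proof. by congr Num.sqrt; apply: eq_bigr => i _; rewrite expr2. Qed.

Lemma eucl_ge0 x : 0 <= eucl x.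
Proof. exact: sqrtr_ge0. Qed.

Lemma sqr_eucl x : eucl x ^+ 2 = dot x x.
Proof. by rewrite euclE sqr_sqrtr ?dotxx_ge0. Qed.

Lemma eucl_eq0 x : (eucl x == 0) = (x == 0).
Proof. by rewrite -sqrf_eq0 sqr_eucl dotxx_eq0. Qed.

Lemma eucl_le x b : 0 <= b -> dot x x <= b ^+ 2 -> eucl x <= b.
Proof. by move=> b0; rewrite -sqr_eucl ler_pXn2r // ?nnegrE ?eucl_ge0. Qed.

Lemma euclN x : eucl (- x) = eucl x.
Proof. by rewrite !euclE dotNl dotC dotNl opprK. Qed.

Lemma euclB x y : eucl (x - y) = eucl (y - x).
Proof. by rewrite -euclN opprB. Qed.

Lemma cauchy_schwarz x y : dot x y <= eucl x * eucl y.
Proof.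
have [->|x0] := eqVneq x 0; first by rewrite dot0l mulr_ge0 ?eucl_ge0.
have [->|y0] := eqVneq y 0; first by rewrite dot0r mulr_ge0 ?eucl_ge0.
have ab_gt0 : 0 < eucl x * eucl y by rewrite mulr_gt0 // lt0r eucl_eq0 ?eucl_ge0 ?x0 ?y0.
rewrite -(ler_pM2l ab_gt0).
have := dotxx_ge0 (eucl y *: x - eucl x *: y).
rewrite !(dotBl, dotBr, dotZl, dotZr) -!sqr_eucl (dotC y x); nra.
Qed.

Lemma eucl_triangle x y : eucl (x + y) <= eucl x + eucl y.
Proof.
apply: eucl_le; first by rewrite addr_ge0 ?eucl_ge0.
rewrite !(dotDl, dotDr) -!sqr_eucl (dotC y x); have := cauchy_schwarz x y; nra.
Qed.

Lemma eucl_distD x y z : eucl (x - z) <= eucl (x - y) + eucl (y - z).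
Proof. by rewrite -(subrKA y); apply: eucl_triangle. Qed.

Lemma abs_dot_le x u : dot u u <= 1 -> `|dot x u| <= eucl x.
Proof.
move=> u1; have u_le1 : eucl u <= 1 by apply: eucl_le; rewrite ?expr1n.
have x_ge0 := eucl_ge0 x; have u_ge0 := eucl_ge0 u; have CS := cauchy_schwarz x u.
have := cauchy_schwarz (- x) u; rewrite dotNl euclN => CSN.
by rewrite ler_norml; apply/andP; split; nra.
Qed.

Lemma pythagoras x y : dot x y = 0 -> eucl (x + y) ^+ 2 = eucl x ^+ 2 + eucl y ^+ 2.
Proof. by move=> xy; rewrite !sqr_eucl dotDl !dotDr (dotC y) xy addr0 add0r. Qed.

(* |y + z|^2 = |x + y + z|^2 + |z|^2 - |x + z|^2 when x and y are orthogonal. *)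
Lemma eucl_orth_detour x y z : dot x y = 0 -> eucl (y + z) <= eucl (x + y + z) + eucl z.
Proof.
move=> xy; apply: eucl_le; first by rewrite addr_ge0 ?eucl_ge0.
have := dotxx_ge0 (x + z); have := eucl_ge0 (x + y + z); have := eucl_ge0 z.
have := sqr_eucl (x + y + z); have := sqr_eucl z.
rewrite !(dotDl, dotDr) (dotC y x) xy (dotC z x) (dotC z y); nra.
Qed.

End InnerProduct.

Section Orthonormal.
Variables (R : realType) (d : nat).
Local Notation V := 'rV[R]_d.
Implicit Types (e s : seq V) (x y u : V).

(* Zero vectors are allowed, so that Gram-Schmidt needs no case split on linearly
   dependent input. *)
Definition orthonormal0 e :=
  (forall i k, i != k -> dot e`_i e`_k = 0) /\ (forall i, e`_i = 0 \/ dot e`_i e`_i = 1).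

Definition proj e x : V := \sum_(i < size e) dot x e`_i *: e`_i.

Lemma projB e x y : proj e (x - y) = proj e x - proj e y.
Proof. by rewrite /proj -sumrB; apply: eq_bigr => i _; rewrite dotBl scalerBl. Qed.

Lemma proj_rcons e u x : proj (rcons e u) x = proj e x + dot x u *: u.
Proof.
rewrite /proj size_rcons big_ord_recr /= nth_rcons ltnn eqxx; congr (_ + _).
by apply: eq_bigr => i _; rewrite nth_rcons ltn_ord.
Qed.

Section Projection.
Variables (e : seq V) (he : orthonormal0 e).

Lemma dot_orthonormal0_le1 i : dot e`_i e`_i <= 1.
Proof. by case: (he.2 i) => ->; rewrite ?dot0l. Qed.

Lemma dot_proj x i : dot (proj e x) e`_i = dot x e`_i.
Proof.
have [ei0|ei1] := he.2 i; first by rewrite ei0 !dot0r.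
have [ilt|ige] := ltnP i (size e); last by rewrite nth_default ?dot0r.
rewrite /proj dot_suml (bigD1 (Ordinal ilt)) //= dotZl ei1 mulr1 big1 ?addr0 //.
by move=> k kne; rewrite dotZl he.1 ?mulr0 // -(inj_eq val_inj).
Qed.

Lemma dot_sub_proj x i : dot (x - proj e x) e`_i = 0.
Proof. by rewrite dotBl dot_proj subrr. Qed.

Lemma dot_sub_proj_proj x y : dot (x - proj e x) (proj e y) = 0.
Proof. by rewrite /proj dot_sumr big1 // => i _; rewrite dotZr dot_sub_proj mulr0. Qed.

Lemma sqr_eucl_comb_le n (c : 'I_n -> R) :
  eucl (\sum_(i < n) c i *: e`_i) ^+ 2 <= \sum_(i < n) c i ^+ 2.
Proof.
rewrite sqr_eucl dot_suml; apply: ler_sum => i _.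
rewrite dotZl dot_sumr (bigD1 i) //= big1 => [|k ki]; last first.
  by rewrite dotZr he.1 ?mulr0 // eq_sym.
rewrite addr0 dotZr mulrA -expr2; case: (he.2 i) => ->.
  by rewrite dot0r mulr0 sqr_ge0.
by rewrite mulr1.
Qed.

Lemma proj_rcons_id u x :
  orthonormal0 (rcons e u) -> proj e x = x -> proj (rcons e u) x = x.
Proof.
move=> [orth _] ex; rewrite proj_rcons ex -{2}ex /proj dot_suml big1 ?scale0r ?addr0 //.
move=> i _; have := orth i (size e); rewrite !nth_rcons ltn_ord ltnn eqxx.
by rewrite dotZl => ->; rewrite ?mulr0 // neq_ltn ltn_ord.
Qed.

End Projection.

Definition normalize x : V := (eucl x)^-1 *: x.

Lemma eucl_normalizeK x : eucl x *: normalize x = x.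
Proof.
have [->|x0] := eqVneq x 0; first by rewrite /normalize !scaler0.
by rewrite scalerA mulfV ?scale1r // eucl_eq0.
Qed.

Lemma dot_normalize x : normalize x = 0 \/ dot (normalize x) (normalize x) = 1.
Proof.
have [->|x0] := eqVneq x 0; first by left; rewrite /normalize scaler0.
by right; rewrite dotZl dotZr -sqr_eucl; field; rewrite eucl_eq0.
Qed.

Definition gram_schmidt_step e x := rcons e (normalize (x - proj e x)).
Definition gram_schmidt s := foldl gram_schmidt_step [::] s.

Lemma gram_schmidt_rcons s x :
  gram_schmidt (rcons s x) = gram_schmidt_step (gram_schmidt s) x.
Proof. exact: foldl_rcons. Qed.

Lemma size_gram_schmidt s : size (gram_schmidt s) = size s.
Proof.
by elim/last_ind: s => // s x IH; rewrite gram_schmidt_rcons !size_rcons IH.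
Qed.

Lemma orthonormal0_gram_schmidt s : orthonormal0 (gram_schmidt s).
Proof.
elim/last_ind: s => [|s x [orth unit]].
  by split=> [i k _|i]; rewrite nth_nil ?dot0l //; left.
rewrite gram_schmidt_rcons /gram_schmidt_step; set e := gram_schmidt s; set u := normalize _.
have u_orth i : dot u e`_i = 0.
  by rewrite dotZl dot_sub_proj ?mulr0 //; split.
split=> [i k|i]; rewrite !nth_rcons.
  case: (ltngtP i (size e)) => [ilt|igt|ie]; case: (ltngtP k (size e)) => [klt|kgt|ke];
    rewrite ?dot0l ?dot0r ?u_orth ?(dotC _ u) ?u_orth //; first exact: orth.
  by rewrite ie ke eqxx.
case: ltngtP => _; [exact: unit | by left | exact: dot_normalize].
Qed.

Lemma gram_schmidt_span s : {subset gram_schmidt s <= <<s>>%VS}.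
Proof.
elim/last_ind: s => // s x IH u.
have s_sub : (<<s>> <= <<rcons s x>>)%VS.
  by apply: sub_span => y y_s; rewrite mem_rcons in_cons y_s orbT.
rewrite gram_schmidt_rcons /gram_schmidt_step mem_rcons in_cons.
case/predU1P => [->|/IH /(subvP s_sub)//].
apply/memvZ/memvB; first by rewrite memv_span // mem_rcons mem_head.
by apply: memv_suml => i _; apply/memvZ/(subvP s_sub)/IH/mem_nth.
Qed.

Lemma dot_normalize_sub_proj e x :
  orthonormal0 e -> dot x (normalize (x - proj e x)) = eucl (x - proj e x).
Proof.
move=> he; set w := x - proj e x.
rewrite -{1}(subrK (proj e x) x) -/w dotDl !dotZr (dotC (proj e x)) dot_sub_proj_proj //.
rewrite mulr0 addr0 -sqr_eucl.
have [->|w0] := eqVneq (eucl w) 0; first by rewrite invr0 mul0r.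
by rewrite expr2 mulKf.
Qed.

Lemma proj_gram_schmidt s x : x \in s -> proj (gram_schmidt s) x = x.
Proof.
elim/last_ind: s => // s y IH; rewrite mem_rcons in_cons.
have := orthonormal0_gram_schmidt (rcons s y); rewrite gram_schmidt_rcons => he.
case/predU1P => [->|/IH]; last exact: proj_rcons_id.
rewrite /gram_schmidt_step proj_rcons dot_normalize_sub_proj; last exact: orthonormal0_gram_schmidt.
by rewrite eucl_normalizeK addrC subrK.
Qed.

End Orthonormal.

Section AffineProjection.
Variables (R : realType) (d : nat) (e : seq 'rV[R]_d) (c : 'rV[R]_d).
Hypothesis he : orthonormal0 e.
Implicit Types x y p : 'rV[R]_d.

Definition aproj x := c + proj e (x - c).

Section FlatPoint.
Variable y : 'rV[R]_d.
Hypothesis hy : proj e (y - c) = y - c.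

Lemma aproj_subr x : aproj x - y = proj e (x - y).
Proof.
have -> : x - y = (x - c) - (y - c) by rewrite opprB addrA subrK.
by rewrite projB hy opprB addrCA addrA.
Qed.

Lemma dot_sub_aproj x : dot (x - aproj x) (aproj x - y) = 0.
Proof.
have -> : x - aproj x = (x - y) - (aproj x - y) by rewrite opprB addrA subrK.
by rewrite aproj_subr dot_sub_proj_proj.
Qed.

Lemma sqr_eucl_aproj x :
  eucl (x - y) ^+ 2 = eucl (x - aproj x) ^+ 2 + eucl (aproj x - y) ^+ 2.
Proof. by rewrite -pythagoras ?dot_sub_aproj ?subrKA. Qed.

Lemma eucl_aproj_le x : eucl (aproj x - y) <= eucl (x - y).
Proof.
apply: eucl_le; first exact: eucl_ge0.
by rewrite -sqr_eucl (sqr_eucl_aproj x) lerDr sqr_ge0.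
Qed.

Lemma eucl_sub_aproj_le x : eucl (x - aproj x) <= eucl (x - y).
Proof.
apply: eucl_le; first exact: eucl_ge0.
by rewrite -sqr_eucl (sqr_eucl_aproj x) lerDl sqr_ge0.
Qed.

Lemma eucl_aproj_detour x p : eucl (aproj x - p) <= eucl (x - p) + eucl (y - p).
Proof.
have := eucl_orth_detour (y - p) (dot_sub_aproj x).
by rewrite !subrKA.
Qed.

End FlatPoint.
End AffineProjection.

Section Flat.
Variables (R : realType) (d k : nat) (os : 'I_k.+1 -> 'rV[R]_d).

Definition flat_dirs : k.+1.-tuple 'rV[R]_d := [tuple os l - os ord0 | l < k.+1].
Definition flat_basis := gram_schmidt flat_dirs.
Definition flat_proj := aproj flat_basis (os ord0).

Lemma orthonormal0_flat_basis : orthonormal0 flat_basis.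
Proof. exact: orthonormal0_gram_schmidt. Qed.

Lemma size_flat_basis : size flat_basis = k.+1.
Proof. by rewrite size_gram_schmidt size_tuple. Qed.

Lemma center_in_flat_dirs l : os l - os ord0 \in flat_dirs.
Proof. by rewrite -(tnth_mktuple (fun l => os l - os ord0)) mem_tnth. Qed.

Lemma proj_flat_center l : proj flat_basis (os l - os ord0) = os l - os ord0.
Proof. exact/proj_gram_schmidt/center_in_flat_dirs. Qed.

Lemma flat_proj_subr x l : flat_proj x - os l = proj flat_basis (x - os l).
Proof. exact: aproj_subr (proj_flat_center l) x. Qed.

Lemma eucl_flat_proj_le x l : eucl (flat_proj x - os l) <= eucl (x - os l).
Proof. exact (eucl_aproj_le orthonormal0_flat_basis (proj_flat_center l) x). Qed.

Lemma eucl_sub_flat_proj_le x l : eucl (x - flat_proj x) <= eucl (x - os l).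
Proof. exact (eucl_sub_aproj_le orthonormal0_flat_basis (proj_flat_center l) x). Qed.

Lemma eucl_flat_proj_detour x p l : eucl (flat_proj x - p) <= eucl (x - p) + eucl (os l - p).
Proof. exact (eucl_aproj_detour orthonormal0_flat_basis (proj_flat_center l) x p). Qed.

Lemma in_affine_span_dirs y : y - os ord0 \in <<flat_dirs>>%VS -> in_affine_span os y.
Proof.
move/coord_span; set c := coord flat_dirs ^~ (y - os ord0) => yE.
pose c' l := c l + if l == ord0 then 1 - \sum_i c i else 0.
exists c'; split; first by rewrite big_split /= -big_mkcond big_pred1_eq addrC subrK.
under eq_bigr => l _ do rewrite scalerDl (fun_if (fun a => a *: os l)) scale0r.
rewrite big_split /= -big_mkcond big_pred1_eq scalerBl scale1r addrA.
rewrite -[y](subrK (os ord0)) yE scaler_suml addrAC -sumrB.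
by congr (_ + _); apply: eq_bigr => l _; rewrite (nth_mktuple _ _ l) scalerBr.
Qed.

End Flat.

Section Rounding.
Variable R : realType.

Lemma round_to_grid (h a : R) (N : nat) : 0 <= h -> `|a| <= h * N%:R ->
  exists2 t : nat, (t <= N.*2)%N & `|h * (t%:R - N%:R) - a| <= h.
Proof.
move=> h_ge0 aN; have [h0|h_neq0] := eqVneq h 0.
  exists N; first by rewrite -addnn leq_addr.
  by move: aN; rewrite h0 !mul0r sub0r normrN.
have h_gt0 : 0 < h by rewrite lt0r h_neq0.
have /andP [q_lo q_hi] : - N%:R <= a / h <= N%:R.
  by rewrite -ler_norml normrM normfV (gtr0_norm h_gt0) ler_pdivrMr // mulrC.
have q_ge0 : 0 <= a / h + N%:R by lra.
have /andP [t_le t_gt] := truncn_itv q_ge0.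
exists (Num.truncn (a / h + N%:R)).
  by rewrite -ltnS truncn_lt_nat // -addnn -addn1 !natrD; lra.
move: t_le t_gt; rewrite -addn1 natrD; set q := a / h; set t := (Num.truncn _)%:R => t_le t_gt.
have -> : a = q * h by rewrite divfK.
by rewrite ler_norml; apply/andP; split; nra.
Qed.

Lemma round_to_grid_comb d (e : seq 'rV[R]_d) n (h : R) (N : nat) (a : 'I_n -> R) :
  orthonormal0 e -> 0 <= h -> (forall i, `|a i| <= h * N%:R) ->
  exists z : {ffun 'I_n -> 'I_N.*2.+1},
    eucl (\sum_i (h * ((z i)%:R - N%:R)) *: e`_i - \sum_i a i *: e`_i) <= n%:R * h.
Proof.
move=> he h_ge0 aN.
have [z zP] : exists z : 'I_n -> 'I_N.*2.+1, forall i, `|h * ((z i)%:R - N%:R) - a i| <= h.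
  apply: (fin_all_exists (U := fun=> 'I_N.*2.+1)
                         (P := fun i t => `|h * (t%:R - N%:R) - a i| <= h)) => i.
  have [t t_le tP] := round_to_grid h_ge0 (aN i).
  by exists (Ordinal (t_le : (t < N.*2.+1)%N)).
exists [ffun i => z i]; rewrite -sumrB.
under eq_bigr do rewrite ffunE -scalerBl.
apply: eucl_le; first by rewrite mulr_ge0.
rewrite -sqr_eucl (le_trans (sqr_eucl_comb_le he _)) //.
apply: (@le_trans _ _ (\sum_(i < n) h ^+ 2)).
  by apply: ler_sum => i _; rewrite -real_normK ?num_real // lerXn2r ?nnegrE.
rewrite sumr_const card_ord exprMn -[_ *+ n]mulr_natl ler_wpM2r ?sqr_ge0 //.
by rewrite -natrX ler_nat; nia.
Qed.
End Rounding.

Section Grid.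
Variables (R : realType) (d k : nat) (os : 'I_k.+1 -> 'rV[R]_d).
Local Notation j := k.+1.
Local Notation e := (flat_basis os).

(* The scale index [None] stands for [L], and [Some l'] for the distance from [os l]
   to [os l']. *)
Definition grid_scale (L : R) (l : 'I_j) (sc : option 'I_j) : R :=
  if sc is Some l' then eucl (os l - os l') else L.

Definition grid_radius (eps : R) : nat := (Num.truncn (200 * j%:R / eps)).+1.

Definition grid_index (eps : R) :=
  ('I_j * option 'I_j * {ffun 'I_j -> 'I_(grid_radius eps).*2.+1})%type.

Definition grid_point (L eps : R) (x : grid_index eps) : 'rV[R]_d :=
  let: (l, sc, z) := x in
  os l + \sum_i (eps * grid_scale L l sc / (10 * j%:R)
                 * ((z i)%:R - (grid_radius eps)%:R)) *: e`_i.

Definition grid (L eps : R) : {fset 'rV[R]_d} :=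
  [fset grid_point L x | x : grid_index eps]%fset.

Lemma grid_in_flat L eps g : g \in grid L eps -> in_affine_span os g.
Proof.
case/imfsetP => -[[l sc] z] _ -> /=; apply: in_affine_span_dirs.
rewrite addrAC; apply: memvD; first exact/memv_span/center_in_flat_dirs.
by apply: memv_suml => i _; apply/memvZ/gram_schmidt_span/mem_nth; rewrite size_flat_basis.
Qed.

Lemma card_grid L eps : (#|` grid L eps| <= j * j.+1 * (grid_radius eps).*2.+1 ^ j)%N.
Proof.
apply: leq_trans (leq_imfset_card _ _ _) _.
by rewrite /enum_finmem /= -cardE !card_prod card_option card_ffun !card_ord.
Qed.

Lemma card_grid_le L eps : 0 < eps -> eps < 1 / 5 ->
  (#|` grid L eps|)%:R <= 2 * 401 ^+ j * (j ^ 2)%:R * ((j%:R * Num.sqrt j%:R) / eps) ^+ j.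
Proof.
move=> eps_gt0 eps_lt; set J : R := j%:R; set y := J / eps.
have J_ge1 : 1 <= J by rewrite ler1n.
have y_ge5 : 5 <= y by rewrite ler_pdivlMr //; lra.
have y_le : y <= J * Num.sqrt J / eps.
  by rewrite ler_pM2r ?invr_gt0 // ler_peMr ?(le_trans ler01) // -sqrtr1 ler_sqrt.
have radius_le : ((grid_radius eps).*2.+1)%:R <= 401 * y.
  have : (Num.truncn (200 * J / eps))%:R <= 200 * y.
    by rewrite -mulrA truncn_le mulr_ge0 ?divr_ge0 // ltW.
  have -> : ((grid_radius eps).*2.+1)%:R = 2 * (Num.truncn (200 * J / eps))%:R + 3 :> R.
    by rewrite /grid_radius -addnn -natr1 natrD -natr1; ring.
  lra.
have pairs_le : ((j * j.+1)%N)%:R <= 2 * (j ^ 2)%:R :> R by rewrite -natrM ler_nat; nia.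
have cube_le : ((grid_radius eps).*2.+1 ^ j)%:R <= 401 ^+ j * (J * Num.sqrt J / eps) ^+ j.
  rewrite natrX -exprMn lerXn2r ?nnegrE ?ler0n ?(le_trans radius_le) ?ler_wpM2l //; lra.
apply: le_trans (_ : ((j * j.+1 * (grid_radius eps).*2.+1 ^ j)%N)%:R <= _).
  by rewrite ler_nat card_grid.
rewrite (_ : 2 * _ * _ * _ = 2 * (j ^ 2)%:R * (401 ^+ j * (J * Num.sqrt J / eps) ^+ j)).
  by rewrite natrM ler_pM.
by rewrite /J; ring.
Qed.

Lemma grid_round L eps x l sc : 0 < eps -> 0 <= grid_scale L l sc ->
  eucl (flat_proj os x - os l) <= 20 * grid_scale L l sc ->
  exists2 tau, tau \in grid L eps & eucl (tau - flat_proj os x) <= eps * grid_scale L l sc / 10.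
Proof.
move=> eps_gt0 s_ge0 near_l; set s := grid_scale L l sc in s_ge0 near_l *.
set N := grid_radius eps.
have basis := orthonormal0_flat_basis os.
set h := eps * s / (10 * j%:R).
have h_ge0 : 0 <= h := divr_ge0 (mulr_ge0 (ltW eps_gt0) s_ge0) (mulr_ge0 (ler0n _ 10) (ler0n _ j)).
have proj_l : flat_proj os x - os l = \sum_(i < j) dot (x - os l) e`_i *: e`_i.
  by rewrite flat_proj_subr /proj size_flat_basis.
have coord_le (i : 'I_j) : `|dot (x - os l) e`_i| <= h * N%:R.
  rewrite -(dot_proj basis) -flat_proj_subr.
  apply: le_trans (abs_dot_le _ (dot_orthonormal0_le1 basis i)) _.
  apply: le_trans near_l _.
  have -> : 20 * s = h * (200 * j%:R / eps).
    by rewrite /h; field; rewrite lt0r_neq0 //= addrC natr1 pnatr_eq0.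
  by apply: ler_wpM2l => //; exact/ltW/truncnS_gt.
have [z zP] := round_to_grid_comb basis h_ge0 coord_le.
exists (grid_point L ((l, sc, z) : grid_index eps)); first exact: in_imfset.
rewrite -[flat_proj os x](subrK (os l)) proj_l [_ + os l]addrC opprD addrACA subrr add0r.
suff <- : j%:R * h = eps * s / 10 by [].
by rewrite /h; field; rewrite addrC natr1 pnatr_eq0.
Qed.

End Grid.

Lemma sumr_const_cond (R : pzSemiRingType) (I : Type) (r : seq I) (b : pred I) (c : R) :
  \sum_(i <- r | b i) c = (\sum_(i <- r | b i) 1) * c.
Proof. by rewrite mulr_suml; under [RHS]eq_bigr do rewrite mul1r. Qed.

Section Clusters.
Variables (R : realType) (d k : nat) (os : 'I_k.+1 -> 'rV[R]_d).
Local Notation j := k.+1.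
Variables (L eps : R) (P : {fset 'rV[R]_d}) (Ps : 'I_j -> {fset 'rV[R]_d}) (o : 'rV[R]_d).
Hypotheses (eps_gt0 : 0 < eps) (eps_lt : eps < 1 / 5) (L_ge0 : 0 <= L).
Hypothesis Ps_sub : forall l, fsubset (Ps l) P.
Hypothesis Ps_neq0 : forall l, Ps l != fset0.
Hypothesis o_median : is_median P o.
Hypothesis Ps_ball : forall l p, p \in Ps l -> eucl (p - os l) <= L.

Definition outlier p := [forall l : 'I_j, p \notin Ps l].
Hypothesis outliers_few :
  (#|` [fset p in P | outlier p]%fset |)%:R <= eps * (#|` P |)%:R.

Local Notation n := ((#|` P|)%:R : R).
Local Notation cost x := (\sum_(p <- P) eucl (p - x)).
Local Notation n_out := (\sum_(p <- P | outlier p) (1 : R)).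
Local Notation n_in := (\sum_(p <- P | ~~ outlier p) (1 : R)).

Lemma inlierP p : reflect (exists l, p \in Ps l) (~~ outlier p).
Proof. by rewrite negb_forall; apply: (iffP existsP) => -[l /negPn]; exists l. Qed.

Lemma card_split (b : pred 'rV[R]_d) :
  n = \sum_(p <- P | b p) 1 + \sum_(p <- P | ~~ b p) 1.
Proof. by rewrite card_fset_sum1 natr_sum (bigID b). Qed.

Lemma sumr_const_card (c : R) : \sum_(p <- P) c = n * c.
Proof. by rewrite sumr_const_cond card_fset_sum1 natr_sum. Qed.

Lemma card_outliers_le : n_out <= eps * n.
Proof.
by apply: le_trans outliers_few; rewrite card_fset_sum1 natr_sum -big_fset_condE.
Qed.

Lemma card_gt0 : 0 < n.
Proof.
have /fset0Pn [p p_in] := Ps_neq0 ord0.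
by rewrite ltr0n cardfs_gt0; apply/fset0Pn; exists p; apply: (fsubsetP (Ps_sub ord0)).
Qed.

Lemma card_inliers_ge : 4 / 5 * n <= n_in.
Proof.
have : eps * n <= 1 / 5 * n by rewrite ler_wpM2r ?ler0n ?ltW.
by have := card_outliers_le; have := (card_split outlier); lra.
Qed.

Lemma cost_inliers_ge r : (forall l, r <= eucl (o - os l)) -> n_in * (r - L) <= cost o.
Proof.
move=> r_le; rewrite -sumr_const_cond [X in _ <= X](bigID outlier) /= -[X in X <= _]add0r.
apply: lerD; first by apply: sumr_ge0 => p _; exact: eucl_ge0.
apply: ler_sum => p /inlierP [l p_l]; rewrite lerBlDr.
apply: le_trans (r_le l) _; rewrite euclB; apply: le_trans (eucl_distD _ p _) _.
by rewrite euclB addrC lerD2l Ps_ball.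
Qed.

Lemma cost_outliers_le r :
  n_in * (r - L) <= cost o -> n_out * r <= 5 / 4 * eps * cost o + n_out * L.
Proof.
move=> r_le; have n_in_gt0 : 0 < n_in by have := card_inliers_ge; have := card_gt0; lra.
have cost_ge0 : 0 <= cost o by apply: sumr_ge0 => p _; exact: eucl_ge0.
have out_in : 4 * n_out <= 5 * eps * n_in.
  have : eps * n_out <= 1 / 5 * n_out by rewrite ler_wpM2r ?sumr_ge0 // ltW.
  by have := card_outliers_le; rewrite (card_split outlier); lra.
have n_out_ge0 : 0 <= n_out by apply: sumr_ge0.
rewrite -(ler_pM2l n_in_gt0); move: (ler_wpM2r cost_ge0 out_in) r_le n_out_ge0.
move: (n_out) (n_in) (cost o) => a b X; nra.
Qed.

Lemma cost_flat_proj :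
  \sum_(p <- P) eucl (flat_proj os o - p) <= (1 + 5 / 4 * eps) * cost o + n * L.
Proof.
have out_le : \sum_(p <- P | outlier p) eucl (flat_proj os o - p)
    <= \sum_(p <- P | outlier p) eucl (p - o) + n_out * eucl (o - flat_proj os o).
  rewrite -sumr_const_cond -big_split /=; apply: ler_sum => p _.
  by rewrite addrC (euclB o) (euclB p); apply: eucl_distD.
have in_le : \sum_(p <- P | ~~ outlier p) eucl (flat_proj os o - p)
    <= \sum_(p <- P | ~~ outlier p) eucl (p - o) + n_in * L.
  rewrite -sumr_const_cond -big_split /=; apply: ler_sum => p /inlierP [l p_l].
  rewrite (euclB p); apply: le_trans (eucl_flat_proj_detour os o p l) _.
  by rewrite lerD2l euclB; apply: Ps_ball.
have := cost_outliers_le (cost_inliers_ge (eucl_sub_flat_proj_le os o)).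
rewrite [cost o](bigID outlier) [\sum_(p <- P) _](bigID outlier) /= (card_split outlier); lra.
Qed.

Lemma cost_near_flat_proj tau s :
  eucl (tau - flat_proj os o) <= eps * s / 10 -> s * n <= 10 * (cost o + n * L) ->
  n^-1 * \sum_(p <- P) eucl (tau - p)
    <= (1 + 9 / 4 * eps) * (n^-1 * cost o) + (1 + eps) * L.
Proof.
move=> tau_near s_le; have n_gt0 := card_gt0; have n_neq0 := lt0r_neq0 n_gt0.
rewrite -(ler_pM2l n_gt0) mulVKf // mulrDr mulrCA mulVKf //.
have tri : \sum_(p <- P) eucl (tau - p)
    <= \sum_(p <- P) eucl (flat_proj os o - p) + n * eucl (tau - flat_proj os o).
  rewrite -sumr_const_card -big_split /=.
  by apply: ler_sum => p _; rewrite addrC; apply: eucl_distD.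
have := ler_wpM2l (ltW n_gt0) tau_near; have := ler_wpM2l (ltW eps_gt0) s_le.
by have := cost_flat_proj; lra.
Qed.

Section NearestCenter.
Variable l0 : 'I_j.
Hypothesis l0_nearest : forall l, eucl (o - os l0) <= eucl (o - os l).
Local Notation dl := (eucl (o - os l0)).

Definition near_center l := eucl (os l0 - os l) < dl / 20.
Definition near_point p := [exists l, near_center l && (p \in Ps l)].
Local Notation n_near := (\sum_(p <- P | near_point p) (1 : R)).
Local Notation n_far := (\sum_(p <- P | ~~ outlier p && ~~ near_point p) (1 : R)).

Lemma near_point_inlier p : near_point p -> ~~ outlier p.
Proof. by case/existsP => l /andP [_ p_l]; apply/inlierP; exists l. Qed.

Lemma card_inliers_split : n_in = n_near + n_far.
Proof.
rewrite (bigID near_point) /=; congr (_ + _); apply: eq_bigl => p.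
by apply/andb_idl/near_point_inlier.
Qed.

(* Points of clusters near [os l0] are closer to [os l0] than to [o] by [4/5 dl];
   since [o] is a median, they cannot be too many. *)
Lemma near_points_few : 20 * L < dl -> 9 / 5 * n_near <= n.
Proof.
move=> L_lt; have L0 := L_ge0; have dl_gt0 : 0 < dl by lra.
have near_le p : near_point p -> eucl (p - os l0) <= eucl (p - o) - 4 / 5 * dl.
  case/existsP => l /andP [l_near p_l]; move: (Ps_ball p_l) l_near; rewrite /near_center.
  have := eucl_distD p (os l) (os l0); have := eucl_distD o p (os l0).
  by rewrite (euclB (os l)) (euclB o p); lra.
have near_sum : \sum_(p <- P | near_point p) eucl (p - os l0)
    <= \sum_(p <- P | near_point p) eucl (p - o) - n_near * (4 / 5 * dl).
  by rewrite -sumr_const_cond -sumrB; apply: ler_sum.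
have far_sum : \sum_(p <- P | ~~ near_point p) eucl (p - os l0)
    <= \sum_(p <- P | ~~ near_point p) eucl (p - o) + (\sum_(p <- P | ~~ near_point p) 1) * dl.
  by rewrite -sumr_const_cond -big_split; apply: ler_sum => p _; apply: eucl_distD.
have := o_median (os l0); rewrite /dist_sum.
rewrite [\sum_(p <- P) eucl (p - o)](bigID near_point) [\sum_(p <- P) _](bigID near_point) /=.
by move=> med; rewrite -(ler_pM2r dl_gt0) (card_split near_point); lra.
Qed.

Lemma exists_far_center : 20 * L < dl -> exists l, ~~ near_center l.
Proof.
move=> L_lt; apply/existsP; apply: contraT => /existsPn all_near.
have : n_in <= n_near.
  rewrite [n_near]big_mkcond [n_in]big_mkcond; apply: ler_sum => p _.
  case: (boolP (outlier p)) => [_|/inlierP [l p_l]] /=; first by case: ifP.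
  rewrite ifT //.
  by apply/existsP; exists l; rewrite p_l andbT; have := all_near l; rewrite negbK.
by have := near_points_few L_lt; have := card_inliers_ge; have := card_gt0; lra.
Qed.

Lemma cost_far_ge sg : (forall l, ~~ near_center l -> sg <= eucl (os l0 - os l)) ->
  n_far * (sg - dl - L) <= cost o.
Proof.
move=> sg_le; rewrite -sumr_const_cond.
rewrite [cost o](bigID (fun p => ~~ outlier p && ~~ near_point p)) /=.
rewrite -[X in X <= _]addr0; apply: lerD; last by apply: sumr_ge0 => p _; exact: eucl_ge0.
apply: ler_sum => p /andP [/inlierP [l p_l] p_far].
have l_far : ~~ near_center l.
  by apply: contra p_far => l_near; apply/existsP; exists l; rewrite l_near.
have := sg_le l l_far; have := eucl_distD (os l0) o (os l); have := eucl_distD o p (os l).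
have := Ps_ball p_l; rewrite (euclB (os l0) o) (euclB o p); lra.
Qed.

(* If [o] is within [20 L] of [os l0] the scale [L] works; otherwise take the distance
   from [os l0] to the nearest center outside the ball of radius [dl / 20] around it,
   whose clusters carry a fixed fraction of the points by [near_points_few]. *)
Lemma scale_exists : exists sc,
  [/\ 0 <= grid_scale os L l0 sc, dl <= 20 * grid_scale os L l0 sc
     & grid_scale os L l0 sc * n <= 10 * (cost o + n * L)].
Proof.
have L0 := L_ge0; have n_gt0 := card_gt0.
have cost_ge0 : 0 <= cost o by apply: sumr_ge0 => p _; exact: eucl_ge0.
have nL_ge0 : 0 <= n * L by rewrite mulr_ge0 // ltW.
have [dl_le|L_lt] := lerP dl (20 * L).
  by exists None; split => //=; lra.
have [lf lf_far] := exists_far_center L_lt.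
have [l1 l1_far l1_min] :=
  arg_minP (P := [pred l | ~~ near_center l]) (fun l => eucl (os l0 - os l)) lf_far.
exists (Some l1) => /=; set sg := eucl (os l0 - os l1) in l1_far l1_min *.
have sg_ge : dl <= 20 * sg by move: l1_far; rewrite inE /near_center -leNgt -/sg; lra.
split=> //; first exact: eucl_ge0.
have dl_cost : 4 / 5 * n * (19 / 20 * dl) <= cost o.
  apply: le_trans (cost_inliers_ge l0_nearest); apply: ler_pM; rewrite ?card_inliers_ge //; lra.
have [sg_le|sg_gt] := lerP sg (21 / 10 * dl).
  by have := ler_wpM2r (ltW n_gt0) sg_le; lra.
have far_ge : 11 / 45 * n <= n_far.
  by have := card_inliers_split; have := near_points_few L_lt; have := card_inliers_ge; lra.
have far_gap_ge0 : 0 <= sg - dl - L by lra.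
by have := le_trans (ler_wpM2r far_gap_ge0 far_ge) (cost_far_ge l1_min); lra.
Qed.

End NearestCenter.
End Clusters.

Theorem lemma10 (R : realType) (j : nat) (hj : (0 < j)%N) :
  exists C : R, 0 < C /\
  exists Grid : forall d : nat, ('I_j -> 'rV[R]_d) -> R -> R -> {fset 'rV[R]_d},
  forall (d : nat) (os : 'I_j -> 'rV[R]_d) (L eps : R),
    0 < eps -> eps < 1 / 5 -> 0 <= L ->
    [/\ (#|` Grid d os L eps |)%:R
          <= C * (j ^ 2)%:R * ((j%:R * Num.sqrt j%:R) / eps) ^+ j,
        (forall g, g \in Grid d os L eps -> in_affine_span os g)
      & forall (P : {fset 'rV[R]_d}) (Ps : 'I_j -> {fset 'rV[R]_d}) (o : 'rV[R]_d),
          (forall l, fsubset (Ps l) P) ->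
          (forall l, Ps l != fset0) ->
          (forall l l', l != l' -> [disjoint Ps l & Ps l']%fset) ->
          (forall l, is_median (Ps l) (os l)) ->
          is_median P o ->
          (#|` [fset p in P | [forall l : 'I_j, p \notin Ps l]]%fset |)%:R
            <= eps * (#|` P |)%:R ->
          (forall l p, p \in Ps l -> eucl (p - os l) <= L) ->
          exists2 tau, tau \in Grid d os L eps &
            (#|` P |)%:R^-1 * \sum_(p <- P) eucl (tau - p)
              <= (1 + 9 / 4 * eps) * ((#|` P |)%:R^-1 * \sum_(p <- P) eucl (p - o))
                 + (1 + eps) * L ].
Proof.
case: j hj => // k _.
exists (2 * 401 ^+ k.+1); split; first by rewrite mulr_gt0 ?exprn_gt0.
exists (fun d => @grid R d k) => d os L eps eps_gt0 eps_lt L_ge0; split.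
- exact: card_grid_le.
- exact: grid_in_flat.
move=> P Ps o Ps_sub Ps_neq0 _ _ o_median outliers_few Ps_ball.
have [l0 _ l0_nearest] := arg_minP (fun l => eucl (o - os l)) (isT : predT ord0).
have [sc [s_ge0 dist_le s_le]] :=
  scale_exists eps_lt L_ge0 Ps_sub Ps_neq0 o_median Ps_ball outliers_few (l0_nearest^~ isT).
have [tau tau_in tau_near] :=
  grid_round eps_gt0 s_ge0 (le_trans (eucl_flat_proj_le os o l0) dist_le).
by exists tau; last exact: cost_near_flat_proj tau_near s_le.
Qed.
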